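(* Let $X$ be a real vector space, $n\ge 2$, and let $(\cdot,\cdot\mid\cdot,\ldots,\cdot)$ be a weak $n$-inner product on $X$. Fix $x_2,\ldots,x_n\in X$, let $Y=\mathrm{span}\{x_2,\ldots,x_n\}$ and let $X/Y=\{\hat x: x\in X\}$ be the quotient space, where $\hat x=\{u\in X: u-x\in Y\}$. Then the function $\psi:(X/Y)^2\to\mathbb{R}$, $\psi(\hat x,\hat y):=(x,y\mid x_n,\ldots,x_2)$, is well defined and is a semi-inner product on $X/Y$. Moreover, if $x_2,\ldots,x_n$ are linearly independent, then $\psi$ is an inner product on $X/Y$.
   Context: A weak $n$-inner product ($n\ge2$) on a real vector space $X$ is a function $(\cdot,\cdot\mid\cdot,\ldots,\cdot):X^{n+1}\to\mathbb{R}$, written $(x,y\mid x_n,\ldots,x_2)$, such that for all $x,x',y,x_2,\ldots,x_n\in X$ and $\alpha\in\mathbb{R}$: (P1) $(x,x\mid x_n,\ldots,x_2)\ge 0$, with equality if and only if $x,x_2,\ldots,x_n$ are linearly dependent; (P2) $(x,x\mid x_n,\ldots,x_2)=(x_n,x_n\mid x,x_{n-1},\ldots,x_2)$; (P3) $(x,y\mid x_n,\ldots,x_2)=(y,x\mid x_n,\ldots,x_2)$; (P4) $(\alpha x,y\mid x_n,\ldots,x_2)=\alpha(x,y\mid x_n,\ldots,x_2)$; (P5) $(x+x',y\mid x_n,\ldots,x_2)=(x,y\mid x_n,\ldots,x_2)+(x',y\mid x_n,\ldots,x_2)$. A semi-inner product is a symmetric bilinear form $\psi$ with $\psi(v,v)\ge0$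 for all $v$. *)

From HB Require Import structures.
From mathcomp Require Import all_boot all_order all_algebra.
From mathcomp Require Import classical_sets reals.
Set Implicit Arguments. Unset Strict Implicit. Unset Printing Implicit Defensive.
Import Order.TTheory GRing.Theory Num.Theory.
Local Open Scope ring_scope.
Local Open Scope classical_set_scope.

Section Defs.
Variables (R : realType) (X : lmodType R).

Definition lin_dep (s : seq X) : Prop :=
  exists c : seq R, size c = size s /\ has (fun a => a != 0) c /\
    \sum_(i < size s) c`_i *: s`_i = 0.

Definition lin_span (s : seq X) : set X :=
  [set v | exists c : seq R, size c = size s /\ v = \sum_(i < size s) c`_i *: s`_i].

Definition qclass (Y : set X) (x : X) : set X := [set u | Y (u - x)].

(* A weak n-inner product.  The conditioning list s = [:: x_n; ...; x_2]
   (of size n-1) encodes (x, y | x_n, ..., x_2) as  ip x y s. *)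
Definition weak_n_inner_product (n : nat) (ip : X -> X -> seq X -> R) : Prop :=
  [/\ forall x s, size s = n.-1 ->
         0 <= ip x x s /\ (ip x x s = 0 <-> lin_dep (x :: s)),
      forall x z t, size t = n.-2 -> ip x x (z :: t) = ip z z (x :: t),
      forall x y s, size s = n.-1 -> ip x y s = ip y x s,
      forall a x y s, size s = n.-1 -> ip (a *: x) y s = a * ip x y s
    & forall x x' y s, size s = n.-1 -> ip (x + x') y s = ip x y s + ip x' y s].

(* psi, defined on the classes of X/Y (the quotient operations being
   qclass Y x + qclass Y y = qclass Y (x + y), a *: qclass Y x = qclass Y (a *: x)),
   is a semi-inner product: symmetric bilinear and nonnegative. *)
Definition quot_semi_inner_product (Y : set X) (psi : set X -> set X -> R) : Prop :=
  [/\
      forall x y, psi (qclass Y x) (qclass Y y) = psi (qclass Y y) (qclass Y x),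
      forall x, 0 <= psi (qclass Y x) (qclass Y x)
    &
      [/\ forall a x y, psi (qclass Y (a *: x)) (qclass Y y) = a * psi (qclass Y x) (qclass Y y),
          forall x x' y, psi (qclass Y (x + x')) (qclass Y y)
                     = psi (qclass Y x) (qclass Y y) + psi (qclass Y x') (qclass Y y),
          forall a x y, psi (qclass Y x) (qclass Y (a *: y)) = a * psi (qclass Y x) (qclass Y y)
        & forall x y y', psi (qclass Y x) (qclass Y (y + y'))
                     = psi (qclass Y x) (qclass Y y) + psi (qclass Y x) (qclass Y y')]].

Definition quot_inner_product (Y : set X) (psi : set X -> set X -> R) : Prop :=
  quot_semi_inner_product Y psi /\
  forall x, psi (qclass Y x) (qclass Y x) = 0 -> qclass Y x = qclass Y 0.

End Defs.

(* For a positive semidefinite symmetric form, isotropic vectors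
   lie in the radical (otherwise B (t y + z) (t y + z) = 2 t B y z + B z z
   would become negative for a suitable t).  Every d in Y = span s is isotropic
   by P1, since d, x_n, ..., x_2 are dependent; so ip x y s only depends on the
   classes of x and y, and psi is well defined.  If s is independent and
   ip x x s = 0, then x :: s is dependent by P1, which forces x into Y. *)

From HB Require Import structures.
From mathcomp Require Import all_boot all_order all_algebra.
From mathcomp Require Import classical_sets reals.
From mathcomp Require Import ring lra.
Set Implicit Arguments. Unset Strict Implicit.
Import Order.TTheory GRing.Theory Num.Theory.
Local Open Scope ring_scope.
Local Open Scope classical_set_scope.

Section LinearSpan.
Variables (R : realType) (X : lmodType R).
Implicit Types (s : seq X) (x y : X).

Lemma lin_span0 s : lin_span s 0.
Proof.
exists (nseq (size s) 0); rewrite size_nseq; split => //.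
by rewrite big1 // => i _; rewrite nth_nseq ltn_ord scale0r.
Qed.

Lemma lin_spanD s x y : lin_span s x -> lin_span s y -> lin_span s (x + y).
Proof.
move=> [c [_ ->]] [d [_ ->]].
exists (mkseq (fun i => c`_i + d`_i) (size s)); rewrite size_mkseq; split => //.
by rewrite -big_split /=; apply: eq_bigr => i _; rewrite nth_mkseq // scalerDl.
Qed.

Lemma lin_spanZ s a x : lin_span s x -> lin_span s (a *: x).
Proof.
move=> [c [_ ->]].
exists (mkseq (fun i => a * c`_i) (size s)); rewrite size_mkseq; split => //.
by rewrite scaler_sumr; apply: eq_bigr => i _; rewrite nth_mkseq // scalerA.
Qed.

Lemma lin_spanB s x y : lin_span s x -> lin_span s y -> lin_span s (x - y).
Proof. by move=> hx hy; apply: lin_spanD hx _; rewrite -scaleN1r; apply: lin_spanZ. Qed.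

Lemma lin_dep_span_cons s x : lin_span s x -> lin_dep (x :: s).
Proof.
move=> [c [Hc Hx]]; exists (-1 :: c); split; first by rewrite /= Hc.
split; first by rewrite /= oppr_eq0 oner_eq0.
by rewrite big_ord_recl /= scaleN1r -Hx addNr.
Qed.

Lemma lin_span_dep_cons s x : ~ lin_dep s -> lin_dep (x :: s) -> lin_span s x.
Proof.
move=> Hind [[|c0 c] [//= [Hc] [/= Hnz]]].
rewrite big_ord_recl /= => Hsum.
have c0_neq0 : c0 != 0.
  apply: contra_notN Hind => /eqP c00; exists c; split => //; split.
    by move: Hnz; rewrite c00 eqxx.
  by move: Hsum; rewrite c00 scale0r add0r.
exists (mkseq (fun i => - c`_i / c0) (size s)); rewrite size_mkseq; split => //.
have -> : x = c0^-1 *: (c0 *: x) by rewrite scalerA mulVf // scale1r.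
move/eqP: Hsum; rewrite addr_eq0 => /eqP ->.
rewrite scalerN scaler_sumr -sumrN; apply: eq_bigr => i _.
by rewrite nth_mkseq // scalerA -scaleNr mulNr mulrC.
Qed.

Lemma qclass_span0 s x : lin_span s x -> qclass (lin_span s) x = qclass (lin_span s) 0.
Proof.
move=> hx; apply/seteqP; split => u; rewrite /qclass /= subr0 => hu.
  by rewrite -(subrK x u); apply: lin_spanD.
exact: lin_spanB.
Qed.

End LinearSpan.

Section PsdForm.
Variables (R : realFieldType) (X : lmodType R) (B : X -> X -> R).
Hypotheses (BDl : forall x x' y, B (x + x') y = B x y + B x' y)
           (BZl : forall a x y, B (a *: x) y = a * B x y)
           (BC : forall x y, B x y = B y x)
           (B_ge0 : forall x, 0 <= B x x).

Lemma form_Dr x y y' : B x (y + y') = B x y + B x y'.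
Proof. by rewrite BC BDl BC [B y' x]BC. Qed.

Lemma form_Zr a x y : B x (a *: y) = a * B x y.
Proof. by rewrite BC BZl BC. Qed.

Lemma psd_isotropic_radical y z : B y y = 0 -> B y z = 0.
Proof.
move=> Byy; apply: contraTeq (B_ge0 ((- (B z z + 1) / (2 * B y z)) *: y + z)).
move=> Byz; rewrite -ltNge BDl !form_Dr !BZl !form_Zr Byy (BC z y).
set t := - (B z z + 1) / (2 * B y z).
have tB : t * B y z = - (B z z + 1) / 2 by rewrite /t; field; rewrite Byz.
rewrite mulr0 mulr0 add0r tB; lra.
Qed.

End PsdForm.

Section WeakInnerProduct.
Variables (R : realType) (X : lmodType R) (n : nat) (ip : X -> X -> seq X -> R).
Hypothesis ip_weak : weak_n_inner_product n ip.
Variable s : seq X.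
Hypothesis size_s : size s = n.-1.

Local Notation B x y := (ip x y s).

Lemma ipDl x x' y : B (x + x') y = B x y + B x' y.
Proof. by case: ip_weak => _ _ _ _ P5; apply: P5. Qed.

Lemma ipZl a x y : B (a *: x) y = a * B x y.
Proof. by case: ip_weak => _ _ _ P4 _; apply: P4. Qed.

Lemma ipC x y : B x y = B y x.
Proof. by case: ip_weak => _ _ P3 _ _; apply: P3. Qed.

Lemma ip_ge0 x : 0 <= B x x.
Proof. by case: ip_weak => P1 _ _ _ _; case: (P1 x s size_s). Qed.

Lemma ip_eq0 x : B x x = 0 <-> lin_dep (x :: s).
Proof. by case: ip_weak => P1 _ _ _ _; case: (P1 x s size_s). Qed.

Lemma ipDr x y y' : B x (y + y') = B x y + B x y'.
Proof. exact: (form_Dr (B := fun u v => B u v) ipDl ipC). Qed.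

Lemma ipZr a x y : B x (a *: y) = a * B x y.
Proof. exact: (form_Zr (B := fun u v => B u v) ipZl ipC). Qed.

Lemma ip_span_l d z : lin_span s d -> B d z = 0.
Proof.
move=> hd; apply: (psd_isotropic_radical ipDl ipZl ipC ip_ge0).
exact/ip_eq0/lin_dep_span_cons.
Qed.

Lemma ip_qclass u v x y :
  qclass (lin_span s) x u -> qclass (lin_span s) y v -> B u v = B x y.
Proof.
move=> hu hv; rewrite -(subrK x u) ipDl (ip_span_l _ hu) add0r ipC.
by rewrite -(subrK y v) ipDl (ip_span_l _ hv) add0r ipC.
Qed.

Definition quot_ip (A A' : set X) : R := B (xget 0 A) (xget 0 A').

Lemma quot_ipE x y : quot_ip (qclass (lin_span s) x) (qclass (lin_span s) y) = B x y.
Proof.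
have mem_qclass z : qclass (lin_span s) z z by rewrite /qclass /= subrr; apply: lin_span0.
by apply: ip_qclass; apply: xgetI (mem_qclass _).
Qed.

Lemma quot_ip_semi_inner_product : quot_semi_inner_product (lin_span s) quot_ip.
Proof.
split=> [x y|x|]; rewrite ?quot_ipE; [exact: ipC | exact: ip_ge0 |].
by split=> *; rewrite !quot_ipE; [apply: ipZl | apply: ipDl | apply: ipZr | apply: ipDr].
Qed.

Lemma quot_ip_inner_product : ~ lin_dep s -> quot_inner_product (lin_span s) quot_ip.
Proof.
move=> s_indep; split=> [|x]; first exact: quot_ip_semi_inner_product.
by rewrite quot_ipE => /ip_eq0 /(lin_span_dep_cons s_indep) /qclass_span0.
Qed.

End WeakInnerProduct.

Theorem theorem2p1 (R : realType) (X : lmodType R) (n : nat)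
    (ip : X -> X -> seq X -> R) (s : seq X) :
  (2 <= n)%N -> weak_n_inner_product n ip -> size s = n.-1 ->
  exists psi : set X -> set X -> R,
    (forall x y, psi (qclass (lin_span s) x) (qclass (lin_span s) y) = ip x y s) /\
    quot_semi_inner_product (lin_span s) psi /\
    (~ lin_dep s -> quot_inner_product (lin_span s) psi).
Proof.
move=> _ ip_weak size_s; exists (quot_ip ip s); split; last split.
- exact: (quot_ipE ip_weak size_s).
- exact: (quot_ip_semi_inner_product ip_weak size_s).
- exact: (quot_ip_inner_product ip_weak size_s).
Qed.
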